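(* Let $(\pi_k)_{k=0}^K$ be deterministic policies on an MDP as in the context, with $q^{\pi'_k}$, $v^{\pi'_k}$, $\sigma_k^2$ and $\Sigma_k^2$ defined in the context. Then for every $k\in\{1,\dots,K\}$, $$\Sigma_k^2 = \gamma^2\sigma_k^2 + \gamma^2P^{\pi_{k-1}}\Sigma_{k-1}^2.$$
   Context: MDP: finite state set $\mathcal{X}$, finite action set $\mathcal{A}$, discount $\gamma\in[0,1)$, reward $r\in[-1,1]^{\mathcal{X}\times\mathcal{A}}$, transition kernel $P(y|x,a)$. $(Pv)(x,a)=\sum_yP(y|x,a)v(y)$; for a policy $\pi$, $(\pi q)(x)=\sum_a\pi(a|x)q(x,a)$ and $(P^\pi q)(x,a) = (P\pi q)(x,a)$; $q^\pi$ is the unique fixed point of $q\mapsto r+\gamma P^\pi q$, $v^\pi=\pi q^\pi$. Definitions: $q^{\pi'_0}:=q^{\pi_0}$; $v^{\pi'_k} := \pi_kq^{\pi'_k}$; $q^{\pi'_k}:=r+\gamma Pv^{\pi'_{k-1}}$ for $k\in[K]$. $\sigma_0^2 := P(v^{\pi_0})^2-(Pv^{\pi_0})^2$ and $\sigma_k^2 := P(v^{\pi'_{k-1}})^2 - (Pv^{\pi'_{k-1}})^2$ for $k\in[K]$. For $k\in\{0,\dots,K\}$ and $(x,a)$, let $(X_t,A_t)_{t\ge0}$ be the process with $X_0=x$, $A_0=a$, $X_{t+1}\sim P(\cdot|X_t,A_t)$, $A_t = \pi_{k-t}(X_t)$ for $1\le t\le k$ and $A_t=\pi_0(X_t)$ for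 $t>k$, and define $\Sigma_k^2(x,a) := \mathbb{E}\big[(\sum_{t=0}^\infty\gamma^t r(X_t,A_t) - q^{\pi'_k}(x,a))^2\big]$. *)

From HB Require Import structures.
From mathcomp Require Import all_boot all_order all_algebra.
From mathcomp Require Import all_classical all_reals.
From mathcomp Require Import topology normedtype sequences.
Set Implicit Arguments. Unset Strict Implicit. Unset Printing Implicit Defensive.
Import Order.TTheory GRing.Theory Num.Theory.
Import numFieldNormedType.Exports.
Local Open Scope ring_scope.

Section MDP.
Variables (R : realType) (X A : finType).
Variables (P : X -> A -> X -> R) (r : X -> A -> R) (gamma : R).
Variable (pi : nat -> X -> A).

Definition Pv (v : X -> R) (x : X) (a : A) : R := \sum_(y : X) P x a y * v y.

Definition Ppi (pol : X -> A) (q : X -> A -> R) (x : X) (a : A) : R :=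
  Pv (fun y => q y (pol y)) x a.

(* q^{pi'_k}, given q0 = q^{pi_0}:  q'_0 = q0, q'_k = r + gamma P v'_{k-1},
   with v'_k = pi_k q'_k. *)
Fixpoint qprime (q0 : X -> A -> R) (k : nat) : X -> A -> R :=
  match k with
  | 0 => q0
  | k'.+1 => fun x a => r x a + gamma * Pv (fun y => qprime q0 k' y (pi k' y)) x a
  end.

Definition vprime (q0 : X -> A -> R) (k : nat) (x : X) : R := qprime q0 k x (pi k x).

Definition sigma2 (q0 : X -> A -> R) (k : nat) (x : X) (a : A) : R :=
  Pv (fun y => (vprime q0 k.-1 y) ^+ 2) x a - (Pv (vprime q0 k.-1) x a) ^+ 2.

(* Trajectories of the process of the context, truncated at horizon T:
   X_0 = x, (X_1, ..., X_T) = the tuple p. *)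
Definition state (x : X) (T : nat) (p : T.-tuple X) (t : nat) : X := nth x (x :: p) t.

Definition action (k : nat) (x : X) (a : A) (T : nat) (p : T.-tuple X) (t : nat) : A :=
  if t == 0%N then a
  else if (t <= k)%N then pi (k - t) (state x p t)
  else pi 0 (state x p t).

Definition path_prob (k : nat) (x : X) (a : A) (T : nat) (p : T.-tuple X) : R :=
  \prod_(t < T) P (state x p t) (action k x a p t) (state x p t.+1).

Definition ret (k : nat) (x : X) (a : A) (T : nat) (p : T.-tuple X) : R :=
  \sum_(t < T.+1) gamma ^+ t * r (state x p t) (action k x a p t).

Definition trunc_sqdev (k : nat) (x : X) (a : A) (c : R) (T : nat) : R :=
  \sum_(p : T.-tuple X) path_prob k x a p * (ret k x a p - c) ^+ 2.

(* Sigma_k^2(x,a) = E[(sum_{t>=0} gamma^t r(X_t,A_t) - q^{pi'_k}(x,a))^2],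
   the expectation of the infinite-horizon quantity being the limit of the
   truncated ones (bounded rewards, gamma < 1: uniform convergence). *)
Definition Sigma2 (q0 : X -> A -> R) (k : nat) (x : X) (a : A) : R :=
  limn (trunc_sqdev k x a (qprime q0 k x a)).

End MDP.

From mathcomp Require Import all_boot all_order all_algebra.
From mathcomp Require Import all_classical all_reals.
From mathcomp Require Import topology normedtype sequences.
From mathcomp Require Import lra ring.
Set Implicit Arguments.
Unset Strict Implicit.
Unset Printing Implicit Defensive.
Import Order.TTheory GRing.Theory Num.Theory.
Import numFieldNormedType.Exports.
Local Open Scope classical_set_scope.
Local Open Scope ring_scope.

(* Conditioning on the first transition X_1 = y turns the return G_{T+1}
   truncated at horizon T+1 into r(x,a) + gamma G'_T, where G' is the return
   of the process started at (y, pi_{k-1}(y)) and driven by the shifted policy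
   sequence.  Hence the first two moments m1, m2 of the truncated return obey
     m1_k(T+1) = r + gamma P^{pi_{k-1}} m1_{k-1}(T),
     m2_k(T+1) = r^2 + 2 gamma r P^{pi_{k-1}} m1_{k-1}(T)
                 + gamma^2 P^{pi_{k-1}} m2_{k-1}(T).
   Their increments in T decay like gamma^T, so both converge; the limit of
   m1_k is q^{pi'_k} (for k = 0 by contraction onto the fixed point q0), and
   Sigma_k^2 = lim m2_k - (q^{pi'_k})^2.  Passing to the limit in the second
   recursion and expanding the squares gives the identity. *)

Section tuple_sums.
Variables (V : nmodType) (X : finType).

Lemma big_tupleS T (F : T.+1.-tuple X -> V) :
  \sum_(p : T.+1.-tuple X) F p =
  \sum_(y : X) \sum_(p : T.-tuple X) F (cons_tuple y p).
Proof.
rewrite pair_big /= (reindex (fun u : X * T.-tuple X => cons_tuple u.1 u.2)) //=.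
exists (fun p : T.+1.-tuple X => (thead p, [tuple of behead p])).
  by move=> [y p] _ /=; congr pair; apply: val_inj.
by move=> p _ /=; rewrite [RHS]tuple_eta.
Qed.

Lemma big_tuple0 (F : 0.-tuple X -> V) : \sum_(p : 0.-tuple X) F p = F [tuple].
Proof. by rewrite (big_pred1 [tuple]) // => p; rewrite /= tuple0; apply/esym/eqP. Qed.

End tuple_sums.

Lemma cvgn_geometric_increments (R : realType) (u : R ^nat) (C q : R) :
  0 <= q < 1 -> (forall n, `|u n.+1 - u n| <= C * q ^+ n) -> cvgn u.
Proof.
move=> /andP[q_ge0 q_lt1] du.
have C_ge0 : 0 <= C by have := du 0%N; rewrite expr0 mulr1; apply: le_trans.
rewrite (funext (eq_sum_telescope u)); apply: is_cvgD; first exact: is_cvg_cst.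
apply: normed_cvg; apply: (@series_le_cvg _ _ (geometric C q)) => //.
- by move=> n /=.
- by move=> n; rewrite /geometric /= mulr_ge0 ?exprn_ge0.
- by apply: is_cvg_geometric_series; rewrite ger0_norm.
Qed.

Section transition_operator.
Variables (R : realType) (X A : finType) (P : X -> A -> X -> R).

Lemma eq_Pv (f g : X -> R) x a : f =1 g -> Pv P f x a = Pv P g x a.
Proof. by move=> fg; congr Pv; apply: funext. Qed.

Lemma PvB (f g : X -> R) x a :
  Pv P f x a - Pv P g x a = Pv P (fun y => f y - g y) x a.
Proof. by rewrite -sumrB; apply: eq_bigr => y _; rewrite mulrBr. Qed.

Lemma cvg_Pv (u : nat -> X -> R) (l : X -> R) x a :
  (forall y, u n y @[n --> \oo] --> l y) -> Pv P (u n) x a @[n --> \oo] --> Pv P l x a.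
Proof.
move=> ul; apply: cvg_big => //; first exact: add_continuous.
by move=> y _; apply: cvgM; [exact: cvg_cst | exact: ul].
Qed.

Hypothesis P_ge0 : forall x a y, 0 <= P x a y.
Hypothesis P_sum1 : forall x a, \sum_y P x a y = 1.

Lemma Pv_norm_le (f : X -> R) C x a : (forall y, `|f y| <= C) -> `|Pv P f x a| <= C.
Proof.
move=> fC; apply: le_trans (ler_norm_sum _ _ _) _.
rewrite -[leRHS]mul1r -(P_sum1 x a) mulr_suml; apply: ler_sum => y _.
by rewrite normrM ger0_norm // ler_wpM2l.
Qed.

Lemma Pv_lincomb c0 c1 c2 (f g : X -> R) x a :
  Pv P (fun y => c0 + c1 * f y + c2 * g y) x a =
  c0 + c1 * Pv P f x a + c2 * Pv P g x a.
Proof.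
rewrite /Pv -[c0 in RHS]mulr1 -(P_sum1 x a) !mulr_sumr -!big_split /=.
by apply: eq_bigr => y _; ring.
Qed.

End transition_operator.

Section trajectories.
Variables (R : realType) (X A : finType) (P : X -> A -> X -> R) (r : X -> A -> R).
Variables (gamma : R) (pi : nat -> X -> A).

Lemma state_cons T x y (p : T.-tuple X) t : (t <= T)%N ->
  state x (cons_tuple y p) t.+1 = state y p t.
Proof. by move=> tT; apply: set_nth_default; rewrite /= size_tuple ltnS. Qed.

Lemma action_cons k T x y a (p : T.-tuple X) t : (t <= T)%N ->
  action pi k x a (cons_tuple y p) t.+1 = action pi k.-1 y (pi k.-1 y) p t.
Proof.
move=> tT; rewrite /action /= state_cons //.
by case: t tT => [|t] _; case: k => [|k] //=; rewrite ?subn1 ?ltnS ?subSS.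
Qed.

Lemma path_prob_cons k T x y a (p : T.-tuple X) :
  path_prob P pi k x a (cons_tuple y p) = P x a y * path_prob P pi k.-1 y (pi k.-1 y) p.
Proof.
rewrite /path_prob big_ord_recl; congr (_ * _).
apply: eq_bigr => t _; rewrite lift0.
by rewrite action_cons ?state_cons // ltnW.
Qed.

Lemma ret_cons k T x y a (p : T.-tuple X) :
  ret r gamma pi k x a (cons_tuple y p) = r x a + gamma * ret r gamma pi k.-1 y (pi k.-1 y) p.
Proof.
rewrite /ret big_ord_recl /= expr0 mul1r mulr_sumr; congr (_ + _).
apply: eq_bigr => t _; rewrite exprS -mulrA.
by rewrite action_cons ?state_cons // -ltnS.
Qed.

Definition ret_mean (F : R -> R) k T x a :=
  \sum_(p : T.-tuple X) path_prob P pi k x a p * F (ret r gamma pi k x a p).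

Definition ret_moment n := ret_mean (fun z => z ^+ n).

Lemma ret_mean0 F k x a : ret_mean F k 0 x a = F (r x a).
Proof. by rewrite /ret_mean big_tuple0 /path_prob big_ord0 mul1r /ret big_ord1 mul1r. Qed.

Lemma ret_meanS F k T x a :
  ret_mean F k T.+1 x a =
  Pv P (fun y => ret_mean (fun z => F (r x a + gamma * z)) k.-1 T y (pi k.-1 y)) x a.
Proof.
rewrite /ret_mean big_tupleS; apply: eq_bigr => y _; rewrite mulr_sumr.
by apply: eq_bigr => p _; rewrite path_prob_cons ret_cons mulrA.
Qed.

Hypothesis P_ge0 : forall x a y, 0 <= P x a y.
Hypothesis P_sum1 : forall x a, \sum_y P x a y = 1.
Hypothesis r_bounded : forall x a, -1 <= r x a <= 1.
Hypothesis gamma_ge0 : 0 <= gamma.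
Hypothesis gamma_lt1 : gamma < 1.

Lemma path_prob_sum1 k T x a : \sum_(p : T.-tuple X) path_prob P pi k x a p = 1.
Proof.
elim: T k x a => [|T IH] k x a; first by rewrite big_tuple0 /path_prob big_ord0.
rewrite big_tupleS -(P_sum1 x a); apply: eq_bigr => y _.
by under eq_bigr do rewrite path_prob_cons; rewrite -mulr_sumr IH mulr1.
Qed.

Lemma ret_mean_quadratic F c0 c1 c2 k T x a :
  (forall z, F z = c0 + c1 * z + c2 * z ^+ 2) ->
  ret_mean F k T x a = c0 + c1 * ret_moment 1 k T x a + c2 * ret_moment 2 k T x a.
Proof.
move=> FE; rewrite /ret_moment /ret_mean -[c0 in RHS]mulr1 -(path_prob_sum1 k T x a).
rewrite !mulr_sumr -!big_split /=; apply: eq_bigr => p _; rewrite FE; ring.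
Qed.

Lemma ret_moment1S k T x a :
  ret_moment 1 k T.+1 x a = r x a + gamma * Ppi P (pi k.-1) (ret_moment 1 k.-1 T) x a.
Proof.
rewrite [LHS]ret_meanS /Ppi -[RHS]addr0.
rewrite -(mul0r (Pv P (fun y => ret_moment 2 k.-1 T y (pi k.-1 y)) x a)) -(Pv_lincomb P_sum1).
by apply: eq_Pv => y; apply: ret_mean_quadratic => z; ring.
Qed.

Lemma ret_moment2S k T x a :
  ret_moment 2 k T.+1 x a =
  r x a ^+ 2 + 2 * gamma * r x a * Ppi P (pi k.-1) (ret_moment 1 k.-1 T) x a
  + gamma ^+ 2 * Ppi P (pi k.-1) (ret_moment 2 k.-1 T) x a.
Proof.
rewrite [LHS]ret_meanS /Ppi -(Pv_lincomb P_sum1).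
by apply: eq_Pv => y; apply: ret_mean_quadratic => z; ring.
Qed.

Lemma trunc_sqdevE k x a c T :
  trunc_sqdev P r gamma pi k x a c T =
  c ^+ 2 - 2 * c * ret_moment 1 k T x a + ret_moment 2 k T x a.
Proof.
have -> : c ^+ 2 - 2 * c * ret_moment 1 k T x a + ret_moment 2 k T x a =
  c ^+ 2 + - (2 * c) * ret_moment 1 k T x a + 1 * ret_moment 2 k T x a by ring.
by apply: (@ret_mean_quadratic (fun z => (z - c) ^+ 2)) => z; ring.
Qed.

Lemma ret_moment0 n k x a : ret_moment n k 0 x a = r x a ^+ n.
Proof. exact: ret_mean0. Qed.

Lemma norm_r_le1 x a : `|r x a| <= 1.
Proof. by rewrite ler_norml r_bounded. Qed.

Lemma ret_moment1_increment k T x a :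
  `|ret_moment 1 k T.+1 x a - ret_moment 1 k T x a| <= gamma ^+ T.+1.
Proof.
elim: T k x a => [|T IH] k x a.
  rewrite ret_moment1S (ret_moment0 1 k x a) addrC addKr normrM ger0_norm //.
  rewrite -[leRHS]mulr1 ler_wpM2l // (Pv_norm_le P_ge0 P_sum1) // => y.
  by rewrite ret_moment0 expr1 norm_r_le1.
rewrite (ret_moment1S k T.+1) (ret_moment1S k T).
rewrite opprD addrACA subrr add0r -mulrBr /Ppi PvB normrM ger0_norm // exprS ler_wpM2l //.
by apply: (Pv_norm_le P_ge0 P_sum1) => y; exact: IH.
Qed.

Lemma norm_moment2_step_le rho d1 d2 g :
  `|rho| <= 1 -> `|d1| <= g -> `|d2| <= 2 / (1 - gamma) * g ->
  `|2 * gamma * rho * d1 + gamma ^+ 2 * d2| <= 2 / (1 - gamma) * (gamma * g).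
Proof.
move=> rho_le1 d1_le d2_le; have g_ge0 := le_trans (normr_ge0 d1) d1_le.
have rho_d1 : `|rho| * `|d1| <= g by rewrite -[g]mul1r ler_pM.
(* c = 2 / (1 - gamma) is the solution of c = 2 + gamma c. *)
have -> : 2 / (1 - gamma) * (gamma * g) =
    2 * (gamma * g) + gamma ^+ 2 * (2 / (1 - gamma) * g).
  by field; rewrite subr_eq0 eq_sym lt_eqF.
apply: le_trans (ler_normD _ _) _.
rewrite !normrM normr_nat ger0_norm // lerD //.
  by rewrite -!mulrA !ler_wpM2l.
by rewrite -expr2 ler_wpM2l ?exprn_ge0.
Qed.

Lemma ret_moment2_increment k T x a :
  `|ret_moment 2 k T.+1 x a - ret_moment 2 k T x a| <= 2 / (1 - gamma) * gamma ^+ T.+1.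
Proof.
elim: T k x a => [|T IH] k x a.
  rewrite ret_moment2S (ret_moment0 2 k x a) -[gamma ^+ 1]mulr1 expr1.
  have -> : forall u s t : R, u + s + t - u = s + t by move=> *; ring.
  apply: norm_moment2_step_le; first exact: norm_r_le1.
    by apply: (Pv_norm_le P_ge0 P_sum1) => y; rewrite ret_moment0 expr1 norm_r_le1.
  apply: (Pv_norm_le P_ge0 P_sum1) => y.
  rewrite ret_moment0 mulr1 normrX (@le_trans _ _ 1) ?exprn_ile1 ?norm_r_le1 //.
  by rewrite ler_pdivlMr ?subr_gt0 // mul1r; have := gamma_ge0; lra.
rewrite (ret_moment2S k T.+1) (ret_moment2S k T) exprS.
have -> : forall u s1 s2 s1' s2' : R,
    u ^+ 2 + 2 * gamma * u * s1 + gamma ^+ 2 * s2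
    - (u ^+ 2 + 2 * gamma * u * s1' + gamma ^+ 2 * s2')
    = 2 * gamma * u * (s1 - s1') + gamma ^+ 2 * (s2 - s2') by move=> *; ring.
rewrite /Ppi !PvB; apply: norm_moment2_step_le; first exact: norm_r_le1.
  by apply: (Pv_norm_le P_ge0 P_sum1) => y; exact: ret_moment1_increment.
by apply: (Pv_norm_le P_ge0 P_sum1) => y; exact: IH.
Qed.

Lemma ret_moment2_cvg k x a : cvgn (fun T => ret_moment 2 k T x a).
Proof.
apply: (@cvgn_geometric_increments _ _ (2 / (1 - gamma) * gamma) gamma).
  by rewrite gamma_ge0 gamma_lt1.
by move=> T; have := ret_moment2_increment k T x a; rewrite exprS mulrA.
Qed.

Lemma policy_evaluation_cvg (pol : X -> A) (q : X -> A -> R) (u : nat -> X -> A -> R) :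
  (forall x a, q x a = r x a + gamma * Ppi P pol q x a) ->
  (forall T x a, u T.+1 x a = r x a + gamma * Ppi P pol (u T) x a) ->
  forall x a, u T x a @[T --> \oo] --> q x a.
Proof.
move=> q_fix u_rec.
pose Q := \big[Num.max/0]_(z : X * A) `|u 0%N z.1 z.2 - q z.1 z.2|.
have err T x a : `|u T x a - q x a| <= gamma ^+ T * Q.
  elim: T x a => [|T IH] x a.
    by rewrite expr0 mul1r (le_bigmax _ (fun z : X * A => `|u 0%N z.1 z.2 - q z.1 z.2|) (x, a)).
  rewrite u_rec q_fix opprD addrACA subrr add0r -mulrBr /Ppi PvB normrM ger0_norm //.
  rewrite exprS -mulrA ler_wpM2l //; apply: (Pv_norm_le P_ge0 P_sum1) => y; exact: IH.
have geo0 : geometric Q gamma @ \oo --> 0 by apply: cvg_geometric; rewrite ger0_norm.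
move=> x a; apply: (@squeeze_cvgr _ _ _ _ (fun T => q x a - geometric Q gamma T)
  (fun T => q x a + geometric Q gamma T)).
- by apply: nearW => T; rewrite /geometric /= -ler_distl mulrC.
- by rewrite -[q x a in X in _ --> X]subr0; apply: cvgB; [exact: cvg_cst | exact: geo0].
- by rewrite -[q x a in X in _ --> X]addr0; apply: cvgD; [exact: cvg_cst | exact: geo0].
Qed.

Variable q0 : X -> A -> R.
Hypothesis q0_fix : forall x a, q0 x a = r x a + gamma * Ppi P (pi 0) q0 x a.

Lemma ret_moment1_cvg k x a :
  ret_moment 1 k T x a @[T --> \oo] --> qprime P r gamma pi q0 k x a.
Proof.
elim: k x a => [|k IH] x a; first by have := policy_evaluation_cvg q0_fix (ret_moment1S 0); apply.
rewrite -cvg_shiftS /=; under eq_cvg do rewrite ret_moment1S.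
by apply: cvgD; [exact: cvg_cst | apply: cvgM; [exact: cvg_cst | exact: cvg_Pv]].
Qed.

Lemma Sigma2E k x a :
  Sigma2 P r gamma pi q0 k x a =
  limn (fun T => ret_moment 2 k T x a) - qprime P r gamma pi q0 k x a ^+ 2.
Proof.
set q := qprime P r gamma pi q0 k x a.
have trunc_cvg : trunc_sqdev P r gamma pi k x a q T @[T --> \oo] -->
    q ^+ 2 - 2 * q * q + limn (fun T => ret_moment 2 k T x a).
  under eq_cvg do rewrite trunc_sqdevE.
  apply: cvgD; last exact: ret_moment2_cvg.
  by apply: cvgB; [exact: cvg_cst | apply: cvgM; [exact: cvg_cst | exact: ret_moment1_cvg]].
by rewrite /Sigma2 -/q (cvg_lim _ trunc_cvg) //; ring.
Qed.

Lemma lim_ret_moment2S k x a :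
  limn (fun T => ret_moment 2 k.+1 T x a) =
  r x a ^+ 2 + 2 * gamma * r x a * Ppi P (pi k) (qprime P r gamma pi q0 k) x a
  + gamma ^+ 2 * Ppi P (pi k) (fun y b => limn (fun T => ret_moment 2 k T y b)) x a.
Proof.
apply: cvg_lim => //; rewrite -cvg_shiftS /=; under eq_cvg do rewrite ret_moment2S.
apply: cvgD; first apply: cvgD; first exact: cvg_cst.
  by apply: cvgM; [exact: cvg_cst | apply: cvg_Pv => y; exact: ret_moment1_cvg].
by apply: cvgM; [exact: cvg_cst | apply: cvg_Pv => y; exact: ret_moment2_cvg].
Qed.

End trajectories.

Theorem lemma23 (R : realType) (X A : finType)
  (P : X -> A -> X -> R) (r : X -> A -> R) (gamma : R)
  (pi : nat -> X -> A) (K : nat) (q0 : X -> A -> R) :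
  (forall x a y, 0 <= P x a y) ->
  (forall x a, \sum_(y : X) P x a y = 1) ->
  (forall x a, -1 <= r x a <= 1) ->
  0 <= gamma -> gamma < 1 ->
  (* q0 = q^{pi_0}: the (unique) fixed point of q |-> r + gamma P^{pi_0} q *)
  (forall x a, q0 x a = r x a + gamma * Ppi P (pi 0%N) q0 x a) ->
  forall k : nat, (1 <= k <= K)%N ->
  forall x a,
    Sigma2 P r gamma pi q0 k x a =
      gamma ^+ 2 * sigma2 P r gamma pi q0 k x a
      + gamma ^+ 2 * Ppi P (pi k.-1) (Sigma2 P r gamma pi q0 k.-1) x a.
Proof.
move=> P_ge0 P_sum1 r_bd gamma_ge0 gamma_lt1 q0_fix [//|k] _ x a /=.
have SigmaE := Sigma2E P_ge0 P_sum1 r_bd gamma_ge0 gamma_lt1 q0_fix.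
rewrite SigmaE (lim_ret_moment2S P_ge0 P_sum1 r_bd gamma_ge0 gamma_lt1 q0_fix).
rewrite /Ppi (eq_Pv P x a (fun y => SigmaE k y (pi k y))) -PvB /sigma2 /vprime /=.
ring.
Qed.
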